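(* Let $A_p\in C[0,\infty)$ be real-valued and consider the Maxwell--Bloch system on $\mathbb X=\mathbb R^2\times S^3$, \[ \dot A=B,\quad \dot B=-\Omega^2A-\sigma B+cj,\quad i\hbar\dot C_1=\hbar\omega_1C_1+iaC_2,\quad i\hbar\dot C_2=\hbar\omega_2C_2-iaC_1, \] with $j=2q\,\mathrm{Im}[\overline{C_1}C_2]$, $a(t)=\frac qc[A(t)+A_p(t)]$, and its reduced dynamics $\dot Y=F(Y,t)$ on $\mathbb Y=\mathbb R^2\times S^2$. Let $T>0$, let $Y(t)=(A(t),B(t),C_*(t))$ be a $T$-periodic solution of the reduced dynamics, and let $\hat Y(t)=(\hat A(t),\hat B(t),\hat C(t))$ be the solution of the Maxwell--Bloch system with any initial state $\hat Y(0)\in\Pi^{-1}(Y(0))$. Then $(\hat A(t),\hat B(t))$, the current $j(t)=2q\,\mathrm{Im}[\overline{\hat C_1(t)}\hat C_2(t)]$ and the population inversion $I(t)=|\hat C_2(t)|^2-|\hat C_1(t)|^2$ are $T$-periodic, while for every $t\ge0$ there is $\theta(t)\in[0,2\pi]$ with $\hat C(t+T)=e^{i\theta(t)}\hat C(t)$.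
   Context: Parameters: $\Omega,\sigma,c,\hbar,p>0$, real $\omega_2>\omega_1$, $\omega=\omega_2-\omega_1$, $q=\omega p$. $S^3=\{C=(C_1,C_2)\in\mathbb C^2:|C_1|^2+|C_2|^2=1\}$. $U(1)$ acts on $\mathbb X$ by $(A,B,C)\mapsto(A,B,e^{i\theta}C)$, commuting with the flow. $\Pi(A,B,C)=(A,B,h(C))$ with $h:S^3\to S^2$ the Hopf fibration identifies $\mathbb X/U(1)$ with $\mathbb Y=\mathbb R^2\times S^2$; the reduced dynamics $\dot Y=F(Y,t)$ is the induced vector field on $\mathbb Y$, so that $\Pi$ maps Maxwell--Bloch solutions to reduced solutions. *)

From Stdlib Require Import Reals.
From Coquelicot Require Import Coquelicot.
Open Scope R_scope.

(* A curve defined on [0, oo) solves an ODE there: it is differentiable with the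
   prescribed derivative at every t > 0 and is right-continuous at 0
   (equivalent, for continuous right-hand sides, to a C^1 solution on [0,oo)). *)
Definition right_cont0 {V : UniformSpace} (f : R -> V) : Prop :=
  filterlim f (at_right 0) (locally (f 0)).

Definition expi (theta : R) : C := (cos theta, sin theta).

Definition omega (w1 w2 : R) : R := w2 - w1.
Definition qq (p w1 w2 : R) : R := omega w1 w2 * p.

Definition acoef (c p w1 w2 : R) (A Ap : R -> R) (t : R) : R :=
  qq p w1 w2 / c * (A t + Ap t).

Definition current (p w1 w2 : R) (C1 C2 : C) : R :=
  2 * qq p w1 w2 * Im (Cconj C1 * C2)%C.

Definition inversion (C1 C2 : C) : R := Cmod C2 ^ 2 - Cmod C1 ^ 2.

Definition on_S3 (C1 C2 : C) : Prop := Cmod C1 ^ 2 + Cmod C2 ^ 2 = 1.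
Definition on_S2 (u v w : R) : Prop := u ^ 2 + v ^ 2 + w ^ 2 = 1.

(* Hopf fibration h : S^3 -> S^2 (convention: h(C) = (2 Re(conj C1 C2),
   2 Im(conj C1 C2), |C2|^2 - |C1|^2)); Pi(A,B,C) = (A,B,h(C)). *)
Definition hopf (C1 C2 : C) : R * R * R :=
  (2 * Re (Cconj C1 * C2)%C, 2 * Im (Cconj C1 * C2)%C, inversion C1 C2).

Definition MB_solution (Omega sigma c hbar p w1 w2 : R) (Ap : R -> R)
    (A B : R -> R) (C1 C2 : R -> C) : Prop :=
  (forall t, 0 <= t -> on_S3 (C1 t) (C2 t)) /\
  right_cont0 A /\ right_cont0 B /\
  right_cont0 (V := C_R_NormedModule) C1 /\ right_cont0 (V := C_R_NormedModule) C2 /\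
  forall t, 0 < t ->
    exists dC1 dC2 : C,
      is_derive A t (B t) /\
      is_derive B t (- Omega ^ 2 * A t - sigma * B t
                     + c * current p w1 w2 (C1 t) (C2 t)) /\
      is_derive (K := R_AbsRing) (V := C_R_NormedModule) C1 t dC1 /\
      is_derive (K := R_AbsRing) (V := C_R_NormedModule) C2 t dC2 /\
      (Ci * RtoC hbar * dC1
        = RtoC (hbar * w1) * C1 t + Ci * RtoC (acoef c p w1 w2 A Ap t) * C2 t)%C /\
      (Ci * RtoC hbar * dC2
        = RtoC (hbar * w2) * C2 t - Ci * RtoC (acoef c p w1 w2 A Ap t) * C1 t)%C.

(* The reduced dynamics dY/dt = F(Y,t) on Y = R^2 x S^2: the vector field induced
   by the Maxwell--Bloch field through Pi (computed with the Hopf convention above):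
     A' = B,  B' = -Omega^2 A - sigma B + c q v,
     u' = omega v + 2 (a/hbar) w,  v' = - omega u,  w' = - 2 (a/hbar) u.
   Note c q v is c times the current j, since j = q v under Pi. *)
Definition reduced_solution (Omega sigma c hbar p w1 w2 : R) (Ap : R -> R)
    (A B u v w : R -> R) : Prop :=
  (forall t, 0 <= t -> on_S2 (u t) (v t) (w t)) /\
  right_cont0 A /\ right_cont0 B /\ right_cont0 u /\ right_cont0 v /\
  right_cont0 w /\
  forall t, 0 < t ->
    let a := acoef c p w1 w2 A Ap t in
    is_derive A t (B t) /\
    is_derive B t (- Omega ^ 2 * A t - sigma * B t + c * qq p w1 w2 * v t) /\
    is_derive u t (omega w1 w2 * v t + 2 * (a / hbar) * w t) /\
    is_derive v t (- omega w1 w2 * u t) /\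
    is_derive w t (- 2 * (a / hbar) * u t).

From Stdlib Require Import Reals Lra Psatz FunctionalExtensionality.
From Coquelicot Require Import Coquelicot.
Open Scope R_scope.

(* The Hopf projection maps the Maxwell--Bloch flow to the reduced flow, and
   the reduced system has unique solutions: for two solutions the squared
   distance E satisfies E' <= K E, because the coupling a enters the Bloch
   equations as a rotation in the (u, w)-plane and depends on the field A only
   linearly. So the projection of the lift is the given T-periodic orbit:
   (A, B) and the Hopf image of C, in particular j = q v and I = w, are
   T-periodic, and C(t + T), C(t) lie in one Hopf fibre, i.e. one U(1)-orbit. *)

Lemma right_cont0_const (a : R) : right_cont0 (fun _ => a).
Proof. apply filterlim_const. Qed.

Lemma right_cont0_plus (f g : R -> R) :
  right_cont0 f -> right_cont0 g -> right_cont0 (fun t => f t + g t).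
Proof.
  intros Hf Hg.
  apply (filterlim_comp_2 (F := at_right 0) f g Rplus Hf Hg).
  apply (filterlim_plus (K := R_AbsRing) (V := R_NormedModule)).
Qed.

Lemma right_cont0_mult (f g : R -> R) :
  right_cont0 f -> right_cont0 g -> right_cont0 (fun t => f t * g t).
Proof.
  intros Hf Hg.
  apply (filterlim_comp_2 (F := at_right 0) f g Rmult Hf Hg).
  apply (filterlim_mult (K := R_AbsRing)).
Qed.

Lemma right_cont0_minus (f g : R -> R) :
  right_cont0 f -> right_cont0 g -> right_cont0 (fun t => f t - g t).
Proof.
  intros Hf Hg.
  replace (fun t => f t - g t) with (fun t => f t + -1 * g t)
    by (apply functional_extensionality; intros; ring).
  apply right_cont0_plus; [exact Hf |].
  apply right_cont0_mult; [apply right_cont0_const | exact Hg].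
Qed.

Lemma right_cont0_pow2 (f : R -> R) : right_cont0 f -> right_cont0 (fun t => f t ^ 2).
Proof.
  intros Hf.
  replace (fun t => f t ^ 2) with (fun t => f t * f t)
    by (apply functional_extensionality; intros; ring).
  apply right_cont0_mult; exact Hf.
Qed.

Lemma right_cont0_Re (f : R -> C) :
  right_cont0 (V := C_R_NormedModule) f -> right_cont0 (fun t => Re (f t)).
Proof.
  intros Hf. eapply filterlim_comp; [exact Hf |].
  destruct (f 0) as [x y].
  apply (continuous_fst (U := R_UniformSpace) (V := R_UniformSpace) x y).
Qed.

Lemma right_cont0_Im (f : R -> C) :
  right_cont0 (V := C_R_NormedModule) f -> right_cont0 (fun t => Im (f t)).
Proof.
  intros Hf. eapply filterlim_comp; [exact Hf |].
  destruct (f 0) as [x y].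
  apply (continuous_snd (U := R_UniformSpace) (V := R_UniformSpace) x y).
Qed.

Lemma right_cont0_of_continuous (f : R -> R) : continuous f 0 -> right_cont0 f.
Proof.
  intros Hf. eapply filterlim_filter_le_1; [| exact Hf].
  intros P [d Hd]. exists d. intros y Hy _. exact (Hd y Hy).
Qed.

(* Coquelicot states these rules with the generic [plus] and [mult], which
   [apply] does not unify with goals written with [Rplus] and [Rmult]. *)
Section RealDerivatives.

Variables (f g : R -> R) (t df dg : R).
Hypotheses (Hf : is_derive f t df) (Hg : is_derive g t dg).

Lemma is_derive_Rplus : is_derive (fun s => f s + g s) t (df + dg).
Proof. apply (is_derive_plus (K := R_AbsRing) (V := R_NormedModule)); assumption. Qed.

Lemma is_derive_Rminus : is_derive (fun s => f s - g s) t (df - dg).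
Proof. apply (is_derive_minus (K := R_AbsRing) (V := R_NormedModule)); assumption. Qed.

Lemma is_derive_Rmult : is_derive (fun s => f s * g s) t (df * g t + f t * dg).
Proof.
  apply (is_derive_mult (K := R_AbsRing)); [exact Hf | exact Hg | intros; apply Rmult_comm].
Qed.

End RealDerivatives.

Lemma is_derive_pow2 (f : R -> R) (t df : R) :
  is_derive f t df -> is_derive (fun s => f s ^ 2) t (2 * f t * df).
Proof.
  intros Hf.
  apply (is_derive_ext (fun s => f s * f s)); [intros s; simpl; ring |].
  replace (2 * f t * df) with (df * f t + f t * df) by ring.
  apply is_derive_Rmult; exact Hf.
Qed.

Lemma is_derive_Re (f : R -> C) (t : R) (l : C) :
  is_derive (K := R_AbsRing) (V := C_R_NormedModule) f t l ->
  is_derive (fun s => Re (f s)) t (Re l).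
Proof.
  intros H.
  exact (filterdiff_comp' (K := R_AbsRing) (U := R_NormedModule) (V := C_R_NormedModule)
    (W := R_NormedModule) f fst t _ _ H
    (filterdiff_linear _ (is_linear_fst (U := R_NormedModule) (V := R_NormedModule)))).
Qed.

Lemma is_derive_Im (f : R -> C) (t : R) (l : C) :
  is_derive (K := R_AbsRing) (V := C_R_NormedModule) f t l ->
  is_derive (fun s => Im (f s)) t (Im l).
Proof.
  intros H.
  exact (filterdiff_comp' (K := R_AbsRing) (U := R_NormedModule) (V := C_R_NormedModule)
    (W := R_NormedModule) f snd t _ _ H
    (filterdiff_linear _ (is_linear_snd (U := R_NormedModule) (V := R_NormedModule)))).
Qed.

Lemma antitone_of_derive_nonpos (F : R -> R) :
  (forall s, 0 < s -> exists d : R, is_derive F s d /\ d <= 0) ->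
  forall s t, 0 < s -> s <= t -> F t <= F s.
Proof.
  intros HF s t Hs Hst.
  destruct (Rle_lt_or_eq_dec s t Hst) as [Hlt | <-]; [| lra].
  assert (HD : forall x, 0 < x -> is_derive F x (Derive F x) /\ Derive F x <= 0).
  { intros x Hx. destruct (HF x Hx) as [d [Hd Hneg]].
    rewrite (is_derive_unique F x d Hd). split; assumption. }
  destruct (MVT_gen F s t (Derive F)) as [r [Hr Hmvt]].
  - intros x Hx. rewrite Rmin_left, Rmax_right in Hx by lra. apply HD; lra.
  - intros x Hx. rewrite Rmin_left, Rmax_right in Hx by lra.
    apply derivable_continuous_pt. exists (Derive F x). apply is_derive_Reals, HD; lra.
  - rewrite Rmin_left, Rmax_right in Hr by lra.
    assert (Derive F r <= 0) by (apply HD; lra). nra.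
Qed.

Lemma Gronwall_zero (E : R -> R) (K : R) :
  (forall t, 0 <= t -> 0 <= E t) -> E 0 = 0 -> right_cont0 E ->
  (forall t, 0 < t -> exists e : R, is_derive E t e /\ e <= K * E t) ->
  forall t, 0 <= t -> E t = 0.
Proof.
  intros Hpos H0 Hrc HdE t Ht.
  destruct (Rle_lt_or_eq_dec 0 t Ht) as [Htpos | <-]; [| exact H0].
  (* E e^{-Ks} is nonincreasing on (0, oo) and tends to 0 at 0+. *)
  set (F := fun s => E s * exp (- K * s)).
  assert (HF_antitone : forall s, 0 < s -> s <= t -> F t <= F s).
  { intros s0 Hs0 Hst. apply (antitone_of_derive_nonpos F); [| exact Hs0 | exact Hst].
    intros s Hs.
    destruct (HdE s Hs) as [e [He Hgrow]].
    exists ((e - K * E s) * exp (- K * s)). split.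
    - replace ((e - K * E s) * exp (- K * s))
        with (e * exp (- K * s) + E s * (- K * exp (- K * s))) by ring.
      apply (is_derive_Rmult E (fun s => exp (- K * s))); [exact He | auto_derive; auto; ring].
    - pose proof (exp_pos (- K * s)). nra. }
  assert (HF_rc : right_cont0 F).
  { apply right_cont0_mult; [exact Hrc |].
    apply right_cont0_of_continuous.
    apply (ex_derive_continuous (V := R_NormedModule) (fun s => exp (- K * s))).
    auto_derive. auto. }
  assert (HF0 : F t <= F 0).
  { apply (closed_filterlim_loc F (fun y => F t <= y) (F 0) HF_rc); [| apply closed_ge].
    exists (mkposreal t Htpos). intros s Hs Hs0.
    apply HF_antitone; [exact Hs0 |].
    revert Hs. unfold ball; simpl; unfold AbsRing_ball, abs, minus, plus, opp; simpl.
    rewrite Ropp_0, Rplus_0_r, Rabs_right; lra. }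
  unfold F in HF0. rewrite H0, Rmult_0_l in HF0.
  pose proof (exp_pos (- K * t)). pose proof (Hpos t Ht). nra.
Qed.

Lemma rotation_cross_sqr_le (x y u w : R) :
  u ^ 2 + w ^ 2 <= 1 -> (w * x - u * y) ^ 2 <= x ^ 2 + y ^ 2.
Proof.
  intros Huw.
  assert (Lagrange : (w * x - u * y) ^ 2 + (u * x + w * y) ^ 2 = (x ^ 2 + y ^ 2) * (u ^ 2 + w ^ 2))
    by ring.
  assert ((x ^ 2 + y ^ 2) * (u ^ 2 + w ^ 2) <= x ^ 2 + y ^ 2).
  { rewrite <- (Rmult_1_r (x ^ 2 + y ^ 2)) at 2. apply Rmult_le_compat_l; [| exact Huw].
    pose proof (pow2_ge_0 x). pose proof (pow2_ge_0 y). lra. }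
  pose proof (pow2_ge_0 (u * x + w * y)). lra.
Qed.

Lemma reduced_energy_bound (dA dB du dv dw u w O2 s cq k : R) :
  0 <= s -> u ^ 2 + w ^ 2 <= 1 ->
  2 * (1 - O2) * dA * dB - 2 * s * dB ^ 2 + 2 * cq * dB * dv + 4 * k * dA * (w * du - u * dw)
  <= (2 + (1 - O2) ^ 2 + cq ^ 2 + 4 * k ^ 2) * (dA ^ 2 + dB ^ 2 + du ^ 2 + dv ^ 2 + dw ^ 2).
Proof.
  intros Hs Huw.
  pose proof (rotation_cross_sqr_le du dw u w Huw) as Hcross.
  pose proof (pow2_ge_0 (dA - (1 - O2) * dB)). pose proof (pow2_ge_0 (dB - cq * dv)).
  pose proof (pow2_ge_0 (dA - 2 * k * (w * du - u * dw))).
  assert (k ^ 2 * (w * du - u * dw) ^ 2 <= k ^ 2 * (du ^ 2 + dw ^ 2))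
    by (apply Rmult_le_compat_l; [apply pow2_ge_0 | exact Hcross]).
  assert (0 <= s * dB ^ 2) by (apply Rmult_le_pos; [exact Hs | apply pow2_ge_0]).
  assert (0 <= ((1 - O2) ^ 2 + cq ^ 2 + 4 * k ^ 2) * dA ^ 2 + (1 + cq ^ 2 + 4 * k ^ 2) * dB ^ 2
               + (2 + (1 - O2) ^ 2 + 4 * k ^ 2) * dv ^ 2
               + (2 + (1 - O2) ^ 2 + cq ^ 2) * (du ^ 2 + dw ^ 2)).
  { pose proof (pow2_ge_0 (1 - O2)). pose proof (pow2_ge_0 cq). pose proof (pow2_ge_0 k).
    pose proof (pow2_ge_0 du). pose proof (pow2_ge_0 dw).
    repeat apply Rplus_le_le_0_compat; apply Rmult_le_pos; try apply pow2_ge_0; lra. }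
  lra.
Qed.

Lemma reduced_solution_unique {Omega sigma c hbar p w1 w2 : R}
  {Ap A B u v w A' B' u' v' w' : R -> R} :
  0 <= sigma ->
  reduced_solution Omega sigma c hbar p w1 w2 Ap A B u v w ->
  reduced_solution Omega sigma c hbar p w1 w2 Ap A' B' u' v' w' ->
  A 0 = A' 0 -> B 0 = B' 0 -> u 0 = u' 0 -> v 0 = v' 0 -> w 0 = w' 0 ->
  forall t, 0 <= t -> A t = A' t /\ B t = B' t /\ u t = u' t /\ v t = v' t /\ w t = w' t.
Proof.
  intros Hsigma (HS2 & rA & rB & ru & rv & rw & D) (_ & rA' & rB' & ru' & rv' & rw' & D')
    HA0 HB0 Hu0 Hv0 Hw0.
  set (E := fun t => (A t - A' t) ^ 2 + (B t - B' t) ^ 2 + (u t - u' t) ^ 2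
                     + (v t - v' t) ^ 2 + (w t - w' t) ^ 2).
  set (k := qq p w1 w2 / c / hbar).
  assert (HE : forall t, 0 <= t -> E t = 0).
  { apply (Gronwall_zero E (2 + (1 - Omega ^ 2) ^ 2 + (c * qq p w1 w2) ^ 2 + 4 * k ^ 2)).
    - intros t _. unfold E.
      pose proof (pow2_ge_0 (A t - A' t)). pose proof (pow2_ge_0 (B t - B' t)).
      pose proof (pow2_ge_0 (u t - u' t)). pose proof (pow2_ge_0 (v t - v' t)).
      pose proof (pow2_ge_0 (w t - w' t)). lra.
    - unfold E. rewrite HA0, HB0, Hu0, Hv0, Hw0. ring.
    - unfold E. repeat apply right_cont0_plus; apply right_cont0_pow2, right_cont0_minus; assumption.
    - intros t Ht.
      destruct (D t Ht) as (dA & dB & du & dv & dw).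
      destruct (D' t Ht) as (dA' & dB' & du' & dv' & dw').
      eexists. split.
      + unfold E.
        do 4 (apply is_derive_Rplus; [| apply is_derive_pow2, is_derive_Rminus; eassumption]).
        apply is_derive_pow2, is_derive_Rminus; eassumption.
      + eapply Rle_trans; [| apply (reduced_energy_bound (A t - A' t) (B t - B' t)
          (u t - u' t) (v t - v' t) (w t - w' t) (u t) (w t) (Omega ^ 2) sigma
          (c * qq p w1 w2) k Hsigma)].
        * (* [a / hbar] is affine in [A] with slope [k]; its common part cancels
             as the generator of a rotation of (u, w). *)
          right. unfold k, acoef, omega, Rdiv. ring.
        * specialize (HS2 t (Rlt_le _ _ Ht)). unfold on_S2 in HS2.
          pose proof (pow2_ge_0 (v t)). lra. }
  intros t Ht. specialize (HE t Ht). unfold E in HE.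
  pose proof (pow2_ge_0 (A t - A' t)). pose proof (pow2_ge_0 (B t - B' t)).
  pose proof (pow2_ge_0 (u t - u' t)). pose proof (pow2_ge_0 (v t - v' t)).
  pose proof (pow2_ge_0 (w t - w' t)).
  assert (Hsqr0 : forall x, x ^ 2 = 0 -> x = 0) by (intros x Hx; nra).
  repeat split; apply Rminus_diag_uniq, Hsqr0; lra.
Qed.

Definition hopf_u (z1 z2 : C) : R := 2 * (Re z1 * Re z2 + Im z1 * Im z2).
Definition hopf_v (z1 z2 : C) : R := 2 * (Re z1 * Im z2 - Im z1 * Re z2).
Definition hopf_w (z1 z2 : C) : R := (Re z2 ^ 2 + Im z2 ^ 2) - (Re z1 ^ 2 + Im z1 ^ 2).

Lemma Cmod_sqr (z : C) : Cmod z ^ 2 = Re z ^ 2 + Im z ^ 2.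
Proof.
  unfold Cmod. rewrite pow2_sqrt; [reflexivity |].
  pose proof (pow2_ge_0 (fst z)). pose proof (pow2_ge_0 (snd z)). lra.
Qed.

Lemma inversion_hopf_w (z1 z2 : C) : inversion z1 z2 = hopf_w z1 z2.
Proof. unfold inversion, hopf_w. rewrite !Cmod_sqr. reflexivity. Qed.

Lemma current_hopf_v (p w1 w2 : R) (z1 z2 : C) :
  current p w1 w2 z1 z2 = qq p w1 w2 * hopf_v z1 z2.
Proof. destruct z1, z2. unfold current, hopf_v. simpl. ring. Qed.

Lemma hopf_coords (z1 z2 : C) : hopf z1 z2 = (hopf_u z1 z2, hopf_v z1 z2, hopf_w z1 z2).
Proof.
  rewrite <- inversion_hopf_w. destruct z1, z2.
  unfold hopf, hopf_u, hopf_v. simpl. f_equal; f_equal; ring.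
Qed.

Lemma hopf_on_S2 (z1 z2 : C) :
  on_S3 z1 z2 -> on_S2 (hopf_u z1 z2) (hopf_v z1 z2) (hopf_w z1 z2).
Proof.
  unfold on_S3, on_S2. rewrite !Cmod_sqr. intros H.
  transitivity ((Re z1 ^ 2 + Im z1 ^ 2 + (Re z2 ^ 2 + Im z2 ^ 2)) ^ 2).
  - unfold hopf_u, hopf_v, hopf_w. ring.
  - rewrite H. ring.
Qed.

Lemma Cmod_1_expi (z : C) : Cmod z = 1 -> exists theta, 0 <= theta <= 2 * PI /\ z = expi theta.
Proof.
  intros Hz. destruct z as [x y].
  assert (Hxy : x ^ 2 + y ^ 2 = 1).
  { pose proof (Cmod_sqr (x, y)) as H. rewrite Hz in H. simpl in H. lra. }
  assert (Hx : -1 <= x <= 1) by (pose proof (pow2_ge_0 y); nra).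
  assert (Hsin : sin (acos x) = Rabs y).
  { rewrite sin_acos by exact Hx. rewrite <- sqrt_Rsqr_abs. f_equal. unfold Rsqr. nra. }
  pose proof (acos_bound x). pose proof PI_RGT_0.
  unfold expi. destruct (Rle_or_lt 0 y) as [Hy | Hy].
  - exists (acos x). split; [lra |].
    rewrite cos_acos, Hsin, Rabs_right by lra. reflexivity.
  - exists (2 * PI - acos x). split; [lra |].
    rewrite cos_minus, sin_minus, cos_2PI, sin_2PI, cos_acos, Hsin, Rabs_left by lra.
    f_equal; ring.
Qed.

(* The Hopf image fixes |z1|^2, |z2|^2 and z1 conj(z2), so with
   lambda := conj(z1) y1 + conj(z2) y2 we get
   lambda z1 = |z1|^2 y1 + z1 conj(z2) y2 = (|y1|^2 + |y2|^2) y1 = y1. *)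
Lemma hopf_fiber_factor (z1 z2 y1 y2 : C) :
  on_S3 z1 z2 -> on_S3 y1 y2 -> hopf y1 y2 = hopf z1 z2 ->
  y1 = ((Cconj z1 * y1 + Cconj z2 * y2) * z1)%C /\ y2 = ((Cconj z1 * y1 + Cconj z2 * y2) * z2)%C.
Proof.
  unfold on_S3. rewrite !hopf_coords, !Cmod_sqr.
  destruct z1 as [a b], z2 as [c d], y1 as [a' b'], y2 as [c' d'].
  unfold hopf_u, hopf_v, hopf_w, Cconj, Cmult, Cplus. simpl.
  intros Hz Hy Hh. injection Hh as Hu Hv Hw.
  assert (R1 : a ^ 2 + b ^ 2 + c' ^ 2 + d' ^ 2 = 1) by lra.
  assert (R2 : c ^ 2 + d ^ 2 + a' ^ 2 + b' ^ 2 = 1) by lra.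
  pose proof (f_equal (Rmult a') R1). pose proof (f_equal (Rmult b') R1).
  pose proof (f_equal (Rmult c') R2). pose proof (f_equal (Rmult d') R2).
  pose proof (f_equal (Rmult a') Hu). pose proof (f_equal (Rmult b') Hu).
  pose proof (f_equal (Rmult c') Hu). pose proof (f_equal (Rmult d') Hu).
  pose proof (f_equal (Rmult a') Hv). pose proof (f_equal (Rmult b') Hv).
  pose proof (f_equal (Rmult c') Hv). pose proof (f_equal (Rmult d') Hv).
  split; f_equal; lra.
Qed.

Lemma hopf_fiber (z1 z2 y1 y2 : C) :
  on_S3 z1 z2 -> on_S3 y1 y2 -> hopf y1 y2 = hopf z1 z2 ->
  exists theta, 0 <= theta <= 2 * PI /\
    y1 = (expi theta * z1)%C /\ y2 = (expi theta * z2)%C.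
Proof.
  intros Hz Hy Hh.
  destruct (hopf_fiber_factor z1 z2 y1 y2 Hz Hy Hh) as [E1 E2].
  set (lambda := (Cconj z1 * y1 + Cconj z2 * y2)%C) in E1, E2.
  assert (Hlambda : Cmod lambda = 1).
  { unfold on_S3 in Hz, Hy. rewrite E1, E2, !Cmod_mult in Hy.
    assert (Hsq : Cmod lambda ^ 2 = 1).
    { rewrite <- Hy. transitivity (Cmod lambda ^ 2 * (Cmod z1 ^ 2 + Cmod z2 ^ 2)).
      - rewrite Hz. ring.
      - ring. }
    pose proof (Cmod_ge_0 lambda). nra. }
  destruct (Cmod_1_expi lambda Hlambda) as [theta [Htheta Hexpi]].
  exists theta. rewrite <- Hexpi. auto.
Qed.

Lemma right_cont0_hopf (C1 C2 : R -> C) :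
  right_cont0 (V := C_R_NormedModule) C1 -> right_cont0 (V := C_R_NormedModule) C2 ->
  right_cont0 (fun t => hopf_u (C1 t) (C2 t)) /\ right_cont0 (fun t => hopf_v (C1 t) (C2 t)) /\
  right_cont0 (fun t => hopf_w (C1 t) (C2 t)).
Proof.
  intros H1 H2.
  pose proof (right_cont0_Re C1 H1). pose proof (right_cont0_Im C1 H1).
  pose proof (right_cont0_Re C2 H2). pose proof (right_cont0_Im C2 H2).
  unfold hopf_u, hopf_v, hopf_w. repeat split.
  - apply right_cont0_mult; [apply right_cont0_const |].
    apply right_cont0_plus; apply right_cont0_mult; assumption.
  - apply right_cont0_mult; [apply right_cont0_const |].
    apply right_cont0_minus; apply right_cont0_mult; assumption.
  - apply right_cont0_minus; apply right_cont0_plus;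
      apply right_cont0_pow2; assumption.
Qed.

(* [hopf_u] and [hopf_v] are the bilinear forms 2 Re and 2 Im of conj(z1) z2,
   and [hopf_w z1 z2 = (hopf_u z2 z2 - hopf_u z1 z1) / 2]. *)
Lemma is_derive_hopf (C1 C2 : R -> C) (t : R) (d1 d2 : C) :
  is_derive (K := R_AbsRing) (V := C_R_NormedModule) C1 t d1 ->
  is_derive (K := R_AbsRing) (V := C_R_NormedModule) C2 t d2 ->
  is_derive (fun s => hopf_u (C1 s) (C2 s)) t (hopf_u d1 (C2 t) + hopf_u (C1 t) d2) /\
  is_derive (fun s => hopf_v (C1 s) (C2 s)) t (hopf_v d1 (C2 t) + hopf_v (C1 t) d2) /\
  is_derive (fun s => hopf_w (C1 s) (C2 s)) t (hopf_u (C2 t) d2 - hopf_u (C1 t) d1).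
Proof.
  intros H1 H2.
  pose proof (is_derive_Re C1 t d1 H1) as dx1. pose proof (is_derive_Im C1 t d1 H1) as dy1.
  pose proof (is_derive_Re C2 t d2 H2) as dx2. pose proof (is_derive_Im C2 t d2 H2) as dy2.
  unfold hopf_u, hopf_v, hopf_w. split; [| split].
  - replace (2 * (Re d1 * Re (C2 t) + Im d1 * Im (C2 t))
             + 2 * (Re (C1 t) * Re d2 + Im (C1 t) * Im d2))
      with (2 * ((Re d1 * Re (C2 t) + Re (C1 t) * Re d2)
                 + (Im d1 * Im (C2 t) + Im (C1 t) * Im d2))) by ring.
    exact (is_derive_scal _ t 2 _ (is_derive_Rplus _ _ _ _ _
      (is_derive_Rmult _ _ _ _ _ dx1 dx2) (is_derive_Rmult _ _ _ _ _ dy1 dy2))).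
  - replace (2 * (Re d1 * Im (C2 t) - Im d1 * Re (C2 t))
             + 2 * (Re (C1 t) * Im d2 - Im (C1 t) * Re d2))
      with (2 * ((Re d1 * Im (C2 t) + Re (C1 t) * Im d2)
                 - (Im d1 * Re (C2 t) + Im (C1 t) * Re d2))) by ring.
    exact (is_derive_scal _ t 2 _ (is_derive_Rminus _ _ _ _ _
      (is_derive_Rmult _ _ _ _ _ dx1 dy2) (is_derive_Rmult _ _ _ _ _ dy1 dx2))).
  - replace (2 * (Re (C2 t) * Re d2 + Im (C2 t) * Im d2)
             - 2 * (Re (C1 t) * Re d1 + Im (C1 t) * Im d1))
      with ((2 * Re (C2 t) * Re d2 + 2 * Im (C2 t) * Im d2)
            - (2 * Re (C1 t) * Re d1 + 2 * Im (C1 t) * Im d1)) by ring.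
    exact (is_derive_Rminus _ _ _ _ _
      (is_derive_Rplus _ _ _ _ _ (is_derive_pow2 _ _ _ dx2) (is_derive_pow2 _ _ _ dy2))
      (is_derive_Rplus _ _ _ _ _ (is_derive_pow2 _ _ _ dx1) (is_derive_pow2 _ _ _ dy1))).
Qed.

Lemma bloch_velocity (hbar om a : R) (z z' d : C) :
  hbar <> 0 ->
  (Ci * RtoC hbar * d = RtoC (hbar * om) * z + Ci * RtoC a * z')%C ->
  d = (- Ci * RtoC om * z + RtoC (a / hbar) * z')%C.
Proof.
  intros Hh E. destruct z as [x y], z' as [x' y'], d as [dx dy].
  unfold Ci, RtoC, Cmult, Cplus, Copp in *. simpl in *.
  injection E as Ere Eim.
  f_equal; apply (Rmult_eq_reg_l hbar); try assumption; field_simplify; try assumption; lra.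
Qed.

Lemma hopf_bloch_field (om1 om2 al : R) (z1 z2 : C) :
  let d1 := (- Ci * RtoC om1 * z1 + RtoC al * z2)%C in
  let d2 := (- Ci * RtoC om2 * z2 + RtoC (- al) * z1)%C in
  hopf_u d1 z2 + hopf_u z1 d2 = omega om1 om2 * hopf_v z1 z2 + 2 * al * hopf_w z1 z2 /\
  hopf_v d1 z2 + hopf_v z1 d2 = - omega om1 om2 * hopf_u z1 z2 /\
  hopf_u z2 d2 - hopf_u z1 d1 = - 2 * al * hopf_u z1 z2.
Proof.
  destruct z1, z2. unfold hopf_u, hopf_v, hopf_w, omega, Ci, RtoC, Cmult, Cplus, Copp.
  simpl. repeat split; ring.
Qed.

Lemma MB_solution_hopf_projection {Omega sigma c hbar p w1 w2 : R} {Ap A B : R -> R}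
  {C1 C2 : R -> C} :
  hbar <> 0 ->
  MB_solution Omega sigma c hbar p w1 w2 Ap A B C1 C2 ->
  reduced_solution Omega sigma c hbar p w1 w2 Ap A B
    (fun t => hopf_u (C1 t) (C2 t)) (fun t => hopf_v (C1 t) (C2 t))
    (fun t => hopf_w (C1 t) (C2 t)).
Proof.
  intros Hh (HS3 & rA & rB & rC1 & rC2 & D).
  destruct (right_cont0_hopf C1 C2 rC1 rC2) as (ru & rv & rw).
  split; [intros t Ht; exact (hopf_on_S2 _ _ (HS3 t Ht)) |].
  do 5 (split; [assumption |]).
  intros t Ht. cbv zeta beta.
  destruct (D t Ht) as (d1 & d2 & dA & dB & H1 & H2 & S1 & S2).
  set (a := acoef c p w1 w2 A Ap t) in *.
  apply bloch_velocity in S1; [| exact Hh].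
  assert (S2' : (Ci * RtoC hbar * d2 = RtoC (hbar * w2) * C2 t + Ci * RtoC (- a) * C1 t)%C)
    by (rewrite S2, RtoC_opp; ring).
  apply bloch_velocity in S2'; [| exact Hh].
  rewrite Rdiv_opp_l in S2'. subst d1 d2.
  destruct (is_derive_hopf C1 C2 t _ _ H1 H2) as (Hu & Hv & Hw).
  destruct (hopf_bloch_field w1 w2 (a / hbar) (C1 t) (C2 t)) as (Eu & Ev & Ew).
  rewrite current_hopf_v, <- Rmult_assoc in dB.
  rewrite Eu in Hu. rewrite Ev in Hv. rewrite Ew in Hw.
  split; [exact dA | split; [exact dB | split; [exact Hu | split; [exact Hv | exact Hw]]]].
Qed.

Theorem lemma3p2 (Omega sigma c hbar p w1 w2 : R)
  (HOmega : 0 < Omega) (Hsigma : 0 < sigma) (Hc : 0 < c) (Hhbar : 0 < hbar)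
  (Hp : 0 < p) (Hw : w1 < w2)
  (Ap : R -> R) (HAp0 : right_cont0 Ap) (HAp : forall t, 0 < t -> continuity_pt Ap t)
  (T : R) (HT : 0 < T)
  (A B u v w : R -> R)
  (HY : reduced_solution Omega sigma c hbar p w1 w2 Ap A B u v w)
  (Hper : forall t, 0 <= t ->
     A (t + T) = A t /\ B (t + T) = B t /\ u (t + T) = u t /\
     v (t + T) = v t /\ w (t + T) = w t)
  (Ah Bh : R -> R) (C1h C2h : R -> C)
  (HYh : MB_solution Omega sigma c hbar p w1 w2 Ap Ah Bh C1h C2h)
  (H0 : Ah 0 = A 0 /\ Bh 0 = B 0 /\ hopf (C1h 0) (C2h 0) = (u 0, v 0, w 0)) :
  (forall t, 0 <= t ->
     Ah (t + T) = Ah t /\ Bh (t + T) = Bh t /\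
     current p w1 w2 (C1h (t + T)) (C2h (t + T)) = current p w1 w2 (C1h t) (C2h t) /\
     inversion (C1h (t + T)) (C2h (t + T)) = inversion (C1h t) (C2h t)) /\
  (forall t, 0 <= t -> exists theta, 0 <= theta <= 2 * PI /\
     C1h (t + T) = (expi theta * C1h t)%C /\ C2h (t + T) = (expi theta * C2h t)%C).
Proof.
  destruct H0 as (HA0 & HB0 & Hhopf0).
  rewrite hopf_coords in Hhopf0. injection Hhopf0 as Hu0 Hv0 Hw0.
  assert (Hlift : forall t, 0 <= t ->
            A t = Ah t /\ B t = Bh t /\ hopf (C1h t) (C2h t) = (u t, v t, w t)).
  { intros t Ht.
    destruct (reduced_solution_unique (Rlt_le _ _ Hsigma) HY
      (MB_solution_hopf_projection (Rgt_not_eq _ _ Hhbar) HYh)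
      (eq_sym HA0) (eq_sym HB0) (eq_sym Hu0) (eq_sym Hv0) (eq_sym Hw0) t Ht)
      as (EA & EB & Eu & Ev & Ew).
    rewrite hopf_coords, Eu, Ev, Ew. auto. }
  assert (Hperiodic : forall t, 0 <= t ->
            Ah (t + T) = Ah t /\ Bh (t + T) = Bh t /\
            hopf (C1h (t + T)) (C2h (t + T)) = hopf (C1h t) (C2h t)).
  { intros t Ht.
    destruct (Hlift t Ht) as (EA & EB & EH).
    destruct (Hlift (t + T) ltac:(lra)) as (EA' & EB' & EH').
    destruct (Hper t Ht) as (PA & PB & Pu & Pv & Pw).
    rewrite EH, EH', Pu, Pv, Pw, <- EA, <- EA', <- EB, <- EB', PA, PB. auto. }
  split; intros t Ht; destruct (Hperiodic t Ht) as (PA & PB & PH).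
  - rewrite !hopf_coords in PH. injection PH as _ Pv Pw.
    rewrite !current_hopf_v, !inversion_hopf_w, Pv, Pw. auto.
  - destruct HYh as [HS3 _].
    apply hopf_fiber; [apply HS3; lra | apply HS3; lra | exact PH].
Qed.
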